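(* Let $X$ be an $n$-dimensional projective space over an arbitrary field and $K$ a $k$-dimensional subspace of $X$ with $-1\le k\le\frac{n-1}{2}$. Then for every point $P$ of $K$ there is a hyperplane $H_P$ of $X$ containing $P$ such that the set $\mathcal B_{X/P}$ of all lines of $X$ through $P$ contained in $H_P$ (which is a $(1,0)$-blocking set in $X/P$, i.e. every plane of $X$ through $P$ contains a line of $\mathcal B_{X/P}$) satisfies: (1) every line of $K$ through $P$ belongs to $\mathcal B_{X/P}$; and (2) for every line $L$ of $K$, the set $\mathcal B_L:=\bigcup_{P\in L}\bigl(\mathcal B_{X/P}\setminus\{\text{lines of }K\text{ through }P\}\bigr)$ blocks $\mathcal S_L:=\{S: S\text{ a plane of }X,\ K\cap S=L\}$, i.e. every $S\in\mathcal S_L$ contains some line of $\mathcal B_L$.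
   Context: Projective dimension is used. For a point $P$ of $X$, the quotient $X/P$ is the projective space whose $r$-dimensional subspaces are the $(r+1)$-dimensional subspaces of $X$ through $P$; thus its points are the lines of $X$ through $P$ and its hyperplanes are the hyperplanes of $X$ through $P$. A $(1,0)$-blocking set in a projective space is a set of points meeting every line. *)

From HB Require Import structures.
From mathcomp Require Import all_boot all_order all_algebra.
Set Implicit Arguments. Unset Strict Implicit. Unset Printing Implicit Defensive.
Import GRing.Theory.
Local Open Scope ring_scope.

(* The n-dimensional projective space PG(n, F) is modelled by the vector space
   F^(n+1) = 'rV[F]_(n.+1); a projective subspace of projective dimension r is
   a vector subspace of (vector) dimension r+1.  Incidence = inclusion. *)
Definition PSpace (F : fieldType) (n : nat) := {vspace 'rV[F]_(n.+1)}.

Definition is_point {F : fieldType} {n : nat} (U : PSpace F n) : bool := \dim U == 1%N.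
Definition is_line  {F : fieldType} {n : nat} (U : PSpace F n) : bool := \dim U == 2%N.
Definition is_plane {F : fieldType} {n : nat} (U : PSpace F n) : bool := \dim U == 3%N.
Definition is_hyperplane {F : fieldType} {n : nat} (U : PSpace F n) : bool := \dim U == n.

From HB Require Import structures.
From mathcomp Require Import all_boot all_order all_algebra.
From mathcomp Require Import zify.
Import GRing.Theory.
Local Open Scope ring_scope.

(* Write X = F^(n+1) with the standard pairing v w^T and K^⊥ for the
   orthogonal of K.  Since 2 dim K <= n + 1 <= dim K + dim K^⊥, there is a
   linear map f, injective on K, with f(K) inside K^⊥.  For a point P = <p>
   of K take H_P = f(p)^⊥: it is a hyperplane because f(p) != 0, and it
   contains K because f(p) ∈ K^⊥, which gives (1).  For (2), pick s ∈ S \ K;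
   the functional r |-> s f(r)^T on the 2-dimensional L vanishes at some
   r != 0, so the line <s, r> lies in S and in H_<r>, but not in K. *)

Section LinearMaps.
Context {F : fieldType}.

Lemma leq_dimv_cap_lker {aT rT : vectType F} (f : 'Hom(aT, rT)) (U : {vspace aT}) :
  (\dim U - dim rT <= \dim (U :&: lker f))%N.
Proof.
have := limg_ker_dim f U; have := dimvS (subvf (f @: U)); rewrite dimvf; lia.
Qed.

Lemma exists_lfun_inj_on {aT rT : vectType F} (U : {vspace aT}) (W : {vspace rT}) :
  (\dim U <= \dim W)%N ->
  exists f : 'Hom(aT, rT), (f @: U <= W)%VS /\ (U :&: lker f = 0)%VS.
Proof.
move=> leUW; set Y := take (\dim U) (vbasis W).
have szY : size Y = \dim U by rewrite size_takel ?size_tuple.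
have freeY : free Y.
  apply: (@catl_free _ _ (drop (\dim U) (vbasis W))).
  by rewrite cat_take_drop (basis_free (vbasisP W)).
have [g /(_ (basis_free (vbasisP U)))] := linear_of_free (vbasis U) Y.
rewrite szY size_tuple => /(_ erefl) gXY.
have imgU : (linfun g @: U)%VS = <<Y>>%VS.
  rewrite -{1}(span_basis (vbasisP U)) limg_span -gXY.
  by congr <<_>>%VS; apply: eq_map => x; rewrite lfunE.
exists (linfun g); split.
  by rewrite imgU; apply/span_subvP => y /mem_take /vbasis_mem.
apply/eqP; rewrite -dimv_eq0; have := limg_ker_dim (linfun g) U.
by rewrite imgU (eqnP freeY) szY; lia.
Qed.

Lemma dimv_add_line {vT : vectType F} (U : {vspace vT}) u :
  u \notin U -> \dim (U + <[u]>) = (\dim U).+1.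
Proof.
move=> uU; have : free (u :: vbasis U).
  by rewrite free_cons (span_basis (vbasisP U)) uU (basis_free (vbasisP U)).
by move/eqnP; rewrite span_cons (span_basis (vbasisP U)) /= size_tuple addvC.
Qed.

End LinearMaps.

Section Duality.
Context {F : fieldType} {m : nat}.
Implicit Types (u v w : 'rV[F]_m) (U : {vspace 'rV[F]_m}).

Definition dual_form w : 'Hom('rV[F]_m, 'rV[F]_1) := linfun (mulmxr w^T).

Definition hyperv w : {vspace 'rV[F]_m} := lker (dual_form w).

Definition orthv U : {vspace 'rV[F]_m} :=
  lker (linfun (mulmxr (\matrix_(i < \dim U) (vbasis U)`_i)^T)).

Lemma memv_hyperv w v : (v \in hyperv w) = (v *m w^T == 0).
Proof. by rewrite memv_ker lfunE. Qed.

Lemma memv_hypervC u v : (u \in hyperv v) = (v \in hyperv u).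
Proof.
by rewrite !memv_hyperv -(inj_eq (@trmx_inj _ _ _)) trmx_mul trmxK trmx0.
Qed.

Lemma hypervS u w : w \in <[u]>%VS -> (hyperv u <= hyperv w)%VS.
Proof.
move=> /vlineP[c ->]; apply/subvP => v; rewrite !memv_hyperv.
by rewrite linearZ /= -scalemxAr => /eqP->; rewrite scaler0.
Qed.

Lemma dim_hyperv w : w != 0 -> \dim (hyperv w) = m.-1.
Proof.
move=> w0; have dim_img : \dim (limg (dual_form w)) = 1%N.
  apply/eqP; rewrite eqn_leq; apply/andP; split.
    by have := dimvS (subvf (limg (dual_form w))); rewrite dimvf dim_matrix mul1r.
  rewrite lt0n dimv_eq0; apply: contraNneq w0 => img0; apply/eqP/rowP => j.
  have := memv_img (dual_form w) (memvf (delta_mx 0 j)).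
  by rewrite img0 memv0 lfunE /= -rowE => /eqP/rowP/(_ 0); rewrite !mxE.
have := limg_ker_dim (dual_form w) fullv.
by rewrite capfv dimvf dim_matrix mul1r dim_img addn1 => /(congr1 predn).
Qed.

Lemma orthvP U w : reflect {in U, forall v, v *m w^T = 0} (w \in orthv U).
Proof.
set E := \matrix_(i < \dim U) (vbasis U)`_i.
have EwT : (w *m E^T == 0) = (E *m w^T == 0).
  by rewrite -(inj_eq (@trmx_inj _ _ _)) trmx_mul trmxK trmx0.
rewrite memv_ker lfunE /= EwT; apply: (iffP eqP) => [Ew0 v /coord_vbasis -> | Uw].
  rewrite mulmx_suml big1 // => i _; rewrite -scalemxAl.
  by rewrite -(rowK (fun i => (vbasis U)`_i) i) -row_mul Ew0 row0 scaler0.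
apply/row_matrixP => i; rewrite row_mul rowK row0; apply: Uw.
by apply: vbasis_mem; rewrite mem_nth ?size_tuple.
Qed.

Lemma dim_orthv U : (m - \dim U <= \dim (orthv U))%N.
Proof.
rewrite /orthv; set g := linfun _; have := leq_dimv_cap_lker g fullv.
by rewrite capfv dimvf !dim_matrix !mul1r.
Qed.

End Duality.

Section ProjectiveGeometry.
Context {F : fieldType} {n : nat}.
Implicit Types (P L M S U : PSpace F n) (w : 'rV[F]_n.+1).

Lemma exists_line_through P U :
  is_point P -> (P <= U)%VS -> (1 < \dim U)%N ->
  exists M, [/\ is_line M, (P <= M)%VS & (M <= U)%VS].
Proof.
move=> /eqP dimP PU dimU; have [u uU uP] : exists2 u, u \in U & u \notin P.
  by apply/subvPn; apply: contraTN dimU => /dimvS; rewrite dimP; lia.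
exists (P + <[u]>)%VS; split; first by rewrite /is_line dimv_add_line // dimP.
  exact: addvSl.
by rewrite subv_add PU -memvE.
Qed.

Lemma is_hyperplane_hyperv w : w != 0 -> is_hyperplane (hyperv w).
Proof. by move=> w0; rewrite /is_hyperplane dim_hyperv. Qed.

Lemma exists_line_in_hyperv P S w :
  is_point P -> is_plane S -> (P <= S)%VS -> (P <= hyperv w)%VS ->
  exists M, [/\ is_line M, (P <= M)%VS, (M <= S)%VS & (M <= hyperv w)%VS].
Proof.
move=> Ppt /eqP dimS PS PH.
have dimSH := leq_dimv_cap_lker (dual_form w) S; rewrite dim_matrix mul1r dimS in dimSH.
have PSH : (P <= S :&: hyperv w)%VS by rewrite subv_cap PS PH.
have [M [Mln PM]] := exists_line_through P _ Ppt PSH dimSH.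
by rewrite subv_cap => /andP[MS MH]; exists M.
Qed.

Section Pairing.
Context {K : PSpace F n} {f : 'End('rV[F]_n.+1)}.
Hypotheses (fK : (f @: K <= orthv K)%VS) (injf : (K :&: lker f = 0)%VS).

Lemma subv_hyperv_pair p : p \in K -> (K <= hyperv (f p))%VS.
Proof.
move=> pK; apply/subvP => v vK; rewrite memv_hyperv.
by have /orthvP-> := subvP fK _ (memv_img f pK).
Qed.

Lemma pair_neq0 p : p \in K -> p != 0 -> f p != 0.
Proof.
move=> pK; apply: contra_neq => fp0; apply/eqP.
by rewrite -memv0 -injf memv_cap pK memv_ker fp0 eqxx.
Qed.

Lemma hyperv_pairS r p : p \in <[r]>%VS -> (hyperv (f r) <= hyperv (f p))%VS.
Proof. by move=> /vlineP[c ->]; rewrite linearZ; apply/hypervS/memvZ/memv_line. Qed.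

Lemma hyperv_pair_point P :
  is_point P -> (P <= K)%VS ->
  is_hyperplane (hyperv (f (vpick P))) /\ (K <= hyperv (f (vpick P)))%VS.
Proof.
move=> /eqP dimP PK; have pK : vpick P \in K := subvP PK _ (memv_pick P).
split; last exact: subv_hyperv_pair.
by rewrite is_hyperplane_hyperv // pair_neq0 // vpick0 -dimv_eq0 dimP.
Qed.

Lemma exists_hyperv_pair_kernel L s :
  (1 < \dim L)%N -> exists2 r, r \in L & (r != 0) && (s \in hyperv (f r)).
Proof.
move=> dimL; have := leq_dimv_cap_lker (dual_form s \o f)%VF L.
rewrite dim_matrix mul1r; set R := (L :&: _)%VS => dimR.
have R0 : R != 0%VS by rewrite -dimv_eq0 -lt0n (leq_trans _ dimR) ?subn_gt0.
have /memv_capP[rL rker] := memv_pick R.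
exists (vpick R) => //; rewrite vpick0 R0 memv_hypervC /hyperv memv_ker.
by rewrite -comp_lfunE -memv_ker.
Qed.

Lemma exists_blocking_line L S :
  is_line L -> (L <= K)%VS -> is_plane S -> (K :&: S)%VS = L ->
  exists P M, [/\ is_point P /\ (P <= L)%VS, is_line M, (P <= M)%VS,
                  (M <= hyperv (f (vpick P)))%VS & ~~ (M <= K)%VS /\ (M <= S)%VS].
Proof.
move=> /eqP dimL LK /eqP dimS KSL.
have [s sS sK] : exists2 s, s \in S & s \notin K.
  apply/subvPn/negP => SK; move: KSL; rewrite (capv_idPr SK) => SL.
  by move: dimS; rewrite SL dimL.
have dimL_gt1 : (1 < \dim L)%N by rewrite dimL.
have [r rL /andP[r0 sHr]] := exists_hyperv_pair_kernel L s dimL_gt1.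
have rK : r \in K := subvP LK r rL.
have LS : (L <= S)%VS by rewrite -KSL capvSr.
exists <[r]>%VS, (<[r]> + <[s]>)%VS; split.
- by rewrite /is_point dim_vline r0 -memvE.
- rewrite /is_line dimv_add_line ?dim_vline ?r0 //.
  by apply: contra sK => /vlineP[c ->]; rewrite memvZ.
- exact: addvSl.
- apply: subv_trans (hyperv_pairS r _ (memv_pick _)).
  by rewrite subv_add -!memvE sHr (subvP (subv_hyperv_pair r rK)).
- split; first by apply: contra sK => /subvP; apply; rewrite memvE addvSr.
  by rewrite subv_add -!memvE sS (subvP LS).
Qed.

End Pairing.

End ProjectiveGeometry.

Theorem corollary3p28 (F : fieldType) (n : nat) (K : PSpace F n)
  (hK : (2 * \dim K <= n.+1)%N) :
  exists H : PSpace F n -> PSpace F n,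
    (forall P : PSpace F n, is_point P -> (P <= K)%VS ->
       [/\ is_hyperplane (H P), (P <= H P)%VS,
           (* B_{X/P} is a (1,0)-blocking set of X/P *)
           (forall S : PSpace F n, is_plane S -> (P <= S)%VS ->
              exists M : PSpace F n,
                [/\ is_line M, (P <= M)%VS, (M <= S)%VS & (M <= H P)%VS])
         & (* (1) lines of K through P lie in H_P *)
           (forall L : PSpace F n, is_line L -> (P <= L)%VS -> (L <= K)%VS ->
              (L <= H P)%VS)]) /\
    (* (2) B_L blocks S_L *)
    (forall L : PSpace F n, is_line L -> (L <= K)%VS ->
       forall S : PSpace F n, is_plane S -> (K :&: S)%VS = L ->
         exists (P M : PSpace F n),
           [/\ is_point P /\ (P <= L)%VS, is_line M, (P <= M)%VS,
               (M <= H P)%VS & ~~ (M <= K)%VS /\ (M <= S)%VS]).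
Proof.
have dimKo : (\dim K <= \dim (orthv K))%N by have := dim_orthv K; lia.
have [f [fK injf]] := exists_lfun_inj_on K (orthv K) dimKo.
exists (fun P => hyperv (f (vpick P))); split=> [P Ppt PK | L Lln LK S Spl KSL].
  have [Hhyp KH] := hyperv_pair_point fK injf P Ppt PK.
  split=> // [|S Spl PS|L _ _ LK]; first exact: subv_trans KH.
    exact: exists_line_in_hyperv (subv_trans PK KH).
  exact: subv_trans KH.
exact: exists_blocking_line.
Qed.
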